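(* Let $w \in \mathbb{R}^n$ with $w_j > 0$ for all $j$, and let $x \in \mathbb{R}^n$ with $x_j > 0$ for $2 \le j \le n$. Then \[ \min_{z \in \Omega_1} \|x - z\| = \min_{t \in [x_1^+,\,1]} \|x - \phi_t(x)\|. \] Moreover, if $z^* = \arg\min_{z \in \Omega_1} \|x - z\|$, then for $2 \le j \le n$: $w_1 z^*_j < w_j z^*_1$ if $w_1 x_j < w_j z^*_1$, and $w_1 z^*_j = w_j z^*_1$ if $w_1 x_j \ge w_j z^*_1$.
   Context: $\|\cdot\|$ is the Euclidean norm on $\mathbb{R}^n$. $\Omega_1 := \{ z \in \mathbb{R}^n_+ : z_1 \le 1,\ w_1 z_j \le w_j z_1 \text{ for } 2 \le j \le n\}$. For $t \in \mathbb{R}$, $\phi_t : \mathbb{R}^n \to \mathbb{R}^n$ is defined by $\phi_t(x)_1 = t$, and for $j \ne 1$: $\phi_t(x)_j = \frac{w_j}{w_1} t$ if $\frac{w_1}{w_j} x_j \ge t$, and $\phi_t(x)_j = x_j$ otherwise. $x_1^+ := \min\{1, \max\{0, x_1\}\}$. *)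

From Stdlib Require Import Reals Lra.
Open Scope R_scope.

(* Vectors in R^n are functions nat -> R; only the coordinates 0..n-1 matter.
   The paper's coordinate j (1-based) is index j-1 here; in particular the
   paper's first coordinate x_1 is [x 0]. *)

Fixpoint rsum (n : nat) (f : nat -> R) : R :=
  match n with
  | O => 0
  | S k => rsum k f + f k
  end.

Definition enorm (n : nat) (v : nat -> R) : R :=
  sqrt (rsum n (fun i => (v i) ^ 2)).

Definition vsub (x z : nat -> R) : nat -> R := fun i => x i - z i.

Definition Omega1 (n : nat) (w z : nat -> R) : Prop :=
  (forall j, (j < n)%nat -> 0 <= z j) /\
  z 0%nat <= 1 /\
  (forall j, (1 <= j < n)%nat -> w 0%nat * z j <= w j * z 0%nat).

Definition phi (w : nat -> R) (t : R) (x : nat -> R) : nat -> R :=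
  fun j =>
    if Nat.eqb j 0 then t
    else if Rle_dec t (w 0%nat / w j * x j) then w j / w 0%nat * t
    else x j.

Definition x1plus (x : nat -> R) : R := Rmin 1 (Rmax 0 (x 0%nat)).

(** The projection onto the cone Omega_1 can be searched along the one-parameter
    family phi_t(x): for z in Omega_1, replacing z_1 by t = max(z_1, x_1^+) and
    every other coordinate z_j by min(x_j, (w_j/w_1) t) moves each coordinate
    closer to x while staying in Omega_1, so the distance from x to Omega_1 is
    the minimum over t in [x_1^+, 1] of the (continuous) distance to phi_t(x).
    Conversely, a minimizer z* cannot be improved by moving one coordinate z_j
    inside its admissible interval [0, (w_j/w_1) z*_1], so z*_j is the nearest
    point of that interval to x_j, i.e. z* = phi_(z*_1)(x); the dichotomy for
    w_1 z*_j follows. *)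

From Stdlib Require Import Reals Lra Lia.
Open Scope R_scope.

Lemma rsum_le n f g :
  (forall i, (i < n)%nat -> f i <= g i) -> rsum n f <= rsum n g.
Proof.
  induction n as [|n IH]; simpl; intros Hfg; [lra|].
  apply Rplus_le_compat; [apply IH; intros i Hi|]; apply Hfg; lia.
Qed.

Lemma rsum_lt n f g j :
  (forall i, (i < n)%nat -> f i <= g i) -> (j < n)%nat -> f j < g j ->
  rsum n f < rsum n g.
Proof.
  induction n as [|n IH]; simpl; intros Hfg Hj Hlt; [lia|].
  destruct (Nat.eq_dec j n) as [->|Hne].
  - apply Rplus_le_lt_compat; [apply rsum_le; intros i Hi; apply Hfg; lia|exact Hlt].
  - apply Rplus_lt_le_compat; [apply IH|apply Hfg; lia]; [intros i Hi; apply Hfg; lia|lia|exact Hlt].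
Qed.

Lemma rsum_nonneg n f : (forall i, (i < n)%nat -> 0 <= f i) -> 0 <= rsum n f.
Proof.
  induction n as [|n IH]; simpl; intros Hf; [lra|].
  apply Rplus_le_le_0_compat; [apply IH; intros i Hi|]; apply Hf; lia.
Qed.

Lemma continuity_pt_rsum n (f : nat -> R -> R) t :
  (forall i, (i < n)%nat -> continuity_pt (f i) t) ->
  continuity_pt (fun u => rsum n (fun i => f i u)) t.
Proof.
  induction n as [|n IH]; simpl; intros Hf.
  - apply continuity_pt_const; intros u v; reflexivity.
  - apply (continuity_pt_plus (fun u => rsum n (fun i => f i u)) (f n));
      [apply IH; intros i Hi|]; apply Hf; lia.
Qed.

Lemma continuity_pt_Rmin f g t :
  continuity_pt f t -> continuity_pt g t ->
  continuity_pt (fun u => Rmin (f u) (g u)) t.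
Proof.
  intros Hf Hg.
  apply (continuity_pt_locally_ext (fun u => (f u + g u - Rabs (f u - g u)) * / 2) _ 1);
    [lra| intros u _; unfold Rmin, Rabs; destruct Rle_dec, Rcase_abs; lra|].
  apply (continuity_pt_mult _ (fun _ => / 2)); [|apply continuity_pt_const; intros u v; reflexivity].
  apply (continuity_pt_minus (fun u => f u + g u)); [apply (continuity_pt_plus f g); assumption|].
  apply (continuity_pt_comp (fun u => f u - g u) Rabs); [apply (continuity_pt_minus f g); assumption|].
  apply Rcontinuity_abs.
Qed.

Lemma Rsqr_sub_Rmin_le a b z : z <= b -> (a - Rmin a b) ^ 2 <= (a - z) ^ 2.
Proof.
  intros Hz. unfold Rmin; destruct Rle_dec.
  - rewrite Rminus_diag, pow_i by lia. apply pow2_ge_0.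
  - apply pow_incr; lra.
Qed.

Lemma Rsqr_sub_clamp_le a z :
  0 <= z <= 1 -> (a - Rmax z (Rmin 1 (Rmax 0 a))) ^ 2 <= (a - z) ^ 2.
Proof. intros Hz. unfold Rmin, Rmax; repeat destruct Rle_dec; nra. Qed.

Definition sqdist (n : nat) (x z : nat -> R) : R := rsum n (fun i => (x i - z i) ^ 2).

Lemma enorm_vsub_le n x y z :
  enorm n (vsub x y) <= enorm n (vsub x z) <-> sqdist n x y <= sqdist n x z.
Proof.
  assert (Hpos : forall v, 0 <= sqdist n x v)
    by (intros v; apply rsum_nonneg; intros i _; apply pow2_ge_0).
  split; [apply sqrt_le_0; apply Hpos | apply sqrt_le_1_alt].
Qed.

Lemma x1plus_bounds x : 0 <= x1plus x <= 1.
Proof. unfold x1plus, Rmin, Rmax; repeat destruct Rle_dec; lra. Qed.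

Definition set_coord (z : nat -> R) (j : nat) (v : R) : nat -> R :=
  fun i => if Nat.eqb i j then v else z i.

Lemma sqdist_set_coord_lt n x z j v :
  (j < n)%nat -> (x j - v) ^ 2 < (x j - z j) ^ 2 ->
  sqdist n x (set_coord z j v) < sqdist n x z.
Proof.
  intros Hj Hv. apply rsum_lt with j; auto; unfold set_coord.
  - intros i _. destruct (Nat.eqb_spec i j) as [->|_]; lra.
  - rewrite Nat.eqb_refl. exact Hv.
Qed.

Lemma Omega1_set_coord n w z j v :
  Omega1 n w z -> (1 <= j < n)%nat -> 0 <= v -> w 0%nat * v <= w j * z 0%nat ->
  Omega1 n w (set_coord z j v).
Proof.
  intros [Hnn [H0 Hcone]] Hj Hv Hvj. unfold Omega1, set_coord.
  replace (Nat.eqb 0 j) with false by (symmetry; apply Nat.eqb_neq; lia).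
  split; [|split; [exact H0|]]; intros i Hi; destruct (Nat.eqb_spec i j) as [->|_]; auto.
Qed.

Lemma phi_Rmin w t x i :
  0 < w 0%nat -> 0 < w i -> i <> 0%nat -> phi w t x i = Rmin (x i) (w i / w 0%nat * t).
Proof.
  intros H0 Hi Hi0. unfold phi. apply Nat.eqb_neq in Hi0. rewrite Hi0.
  assert (Hequiv : t <= w 0%nat / w i * x i <-> w i / w 0%nat * t <= x i).
  { replace (w 0%nat / w i * x i) with (/ (w i / w 0%nat) * x i) by (field; lra).
    assert (Hc : 0 < w i / w 0%nat) by (apply Rdiv_lt_0_compat; lra).
    split; intros H.
    - apply (Rmult_le_compat_l (w i / w 0%nat)) in H; [|lra].
      rewrite <- Rmult_assoc, Rinv_r, Rmult_1_l in H; lra.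
    - apply (Rmult_le_reg_l (w i / w 0%nat)); [lra|].
      rewrite <- Rmult_assoc, Rinv_r, Rmult_1_l; lra. }
  unfold Rmin. destruct Rle_dec as [h|h], Rle_dec as [h'|h']; tauto || lra.
Qed.

Section Projection.
Variables (n : nat) (w x : nat -> R).
Hypothesis Hw : forall j, (j < n)%nat -> 0 < w j.
Hypothesis Hw0 : 0 < w 0%nat.
Hypothesis Hx : forall j, (1 <= j < n)%nat -> 0 < x j.

Lemma phi_Omega1 t : 0 <= t <= 1 -> Omega1 n w (phi w t x).
Proof.
  intros Ht. split; [|split].
  - intros [|j] Hj; [unfold phi; simpl; lra|].
    assert (0 < w (S j)) by (apply Hw; lia). assert (0 < x (S j)) by (apply Hx; lia).
    rewrite phi_Rmin by (lia || lra). apply Rmin_glb; [lra|].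
    apply Rmult_le_pos; [apply Rlt_le, Rdiv_lt_0_compat|]; lra.
  - unfold phi; simpl; lra.
  - intros j Hj. assert (0 < w j) by (apply Hw; lia).
    rewrite phi_Rmin by (lia || lra). change (phi w t x 0%nat) with t.
    replace (w j * t) with (w 0%nat * (w j / w 0%nat * t)) by (field; lra).
    apply Rmult_le_compat_l; [lra|apply Rmin_r].
Qed.

Lemma sqdist_phi_le z :
  Omega1 n w z -> sqdist n x (phi w (Rmax (z 0%nat) (x1plus x)) x) <= sqdist n x z.
Proof.
  intros [Hnn [H0 Hcone]]. apply rsum_le. intros [|j] Hj.
  - apply Rsqr_sub_clamp_le. split; [apply Hnn; lia|exact H0].
  - assert (0 < w (S j)) by (apply Hw; lia).
    rewrite phi_Rmin by (lia || lra). apply Rsqr_sub_Rmin_le.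
    apply Rle_trans with (w (S j) / w 0%nat * z 0%nat).
    + assert (Hj' : w 0%nat * z (S j) <= w (S j) * z 0%nat) by (apply Hcone; lia).
      apply (Rmult_le_reg_l (w 0%nat)); [lra|].
      replace (w 0%nat * (w (S j) / w 0%nat * z 0%nat)) with (w (S j) * z 0%nat) by (field; lra).
      exact Hj'.
    + apply Rmult_le_compat_l; [apply Rlt_le, Rdiv_lt_0_compat; lra|apply Rmax_l].
Qed.

Lemma phi_argmin_exists :
  exists ts, x1plus x <= ts <= 1 /\
    forall t, x1plus x <= t <= 1 -> sqdist n x (phi w ts x) <= sqdist n x (phi w t x).
Proof.
  pose proof (x1plus_bounds x) as Hx1.
  destruct (continuity_ab_min (fun t => sqdist n x (phi w t x)) (x1plus x) 1)
    as [ts [Hmin Hts]]; [lra| |exists ts; auto].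
  intros t _. apply continuity_pt_rsum. intros [|j] Hj.
  - apply continuity_pt_locally_ext with (fun u => (x 0%nat - u) ^ 2) 1;
      [lra|reflexivity|].
    reg.
  - assert (0 < w (S j)) by (apply Hw; lia).
    apply continuity_pt_locally_ext with
      (fun u => (x (S j) - Rmin (x (S j)) (w (S j) / w 0%nat * u)) ^ 2) 1;
      [lra|intros u _; rewrite phi_Rmin by (lia || lra); reflexivity|].
    apply (continuity_pt_comp (fun u => x (S j) - Rmin (x (S j)) (w (S j) / w 0%nat * u))
      (fun v => v ^ 2)); [|reg].
    apply (continuity_pt_minus (fun _ => x (S j))); [reg|].
    apply continuity_pt_Rmin; reg.
Qed.

Lemma minimizer_coord zs :
  Omega1 n w zs ->
  (forall z, Omega1 n w z -> enorm n (vsub x zs) <= enorm n (vsub x z)) ->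
  forall j, (1 <= j < n)%nat -> zs j = Rmin (x j) (w j / w 0%nat * zs 0%nat).
Proof.
  intros Hzs Hmin j Hj. pose proof Hzs as [Hnn [_ Hcone]].
  assert (0 < w j) by (apply Hw; lia). assert (0 < x j) by (apply Hx; lia).
  assert (0 <= zs 0%nat) by (apply Hnn; lia). assert (0 <= zs j) by (apply Hnn; lia).
  set (c := w j / w 0%nat). assert (Hcw : w 0%nat * c = w j) by (unfold c; field; lra).
  assert (Hzj : zs j <= c * zs 0%nat).
  { assert (w 0%nat * zs j <= w j * zs 0%nat) by (apply Hcone; lia). nra. }
  set (v := Rmin (x j) (c * zs 0%nat)).
  assert (Hopt : (x j - zs j) ^ 2 <= (x j - v) ^ 2).
  { apply Rnot_lt_le. intros Hlt.
    assert (Hin : Omega1 n w (set_coord zs j v)).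
    { apply Omega1_set_coord; auto; unfold v, Rmin; destruct Rle_dec; nra. }
    apply Hmin, enorm_vsub_le in Hin.
    pose proof (sqdist_set_coord_lt n x zs j v ltac:(lia) Hlt). lra. }
  unfold v, Rmin in *; destruct Rle_dec; nra.
Qed.

End Projection.

Theorem mainTheorem3 (n : nat) (w x : nat -> R)
  (Hn : (1 <= n)%nat)
  (Hw : forall j, (j < n)%nat -> 0 < w j)
  (Hx : forall j, (1 <= j < n)%nat -> 0 < x j) :
  (* both minima are attained and coincide *)
  (exists (zs : nat -> R) (ts : R),
      Omega1 n w zs /\
      (forall z, Omega1 n w z -> enorm n (vsub x zs) <= enorm n (vsub x z)) /\
      x1plus x <= ts <= 1 /\
      (forall t, x1plus x <= t <= 1 ->
         enorm n (vsub x (phi w ts x)) <= enorm n (vsub x (phi w t x))) /\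
      enorm n (vsub x zs) = enorm n (vsub x (phi w ts x))) /\
  (* structure of the minimizer z* *)
  (forall zs : nat -> R,
      Omega1 n w zs ->
      (forall z, Omega1 n w z -> enorm n (vsub x zs) <= enorm n (vsub x z)) ->
      forall j, (1 <= j < n)%nat ->
        (w 0%nat * x j < w j * zs 0%nat -> w 0%nat * zs j < w j * zs 0%nat) /\
        (w 0%nat * x j >= w j * zs 0%nat -> w 0%nat * zs j = w j * zs 0%nat)).
Proof.
  pose proof (x1plus_bounds x) as Hx1.
  split.
  - destruct (phi_argmin_exists n w x Hw (Hw 0%nat Hn)) as [ts [Hts Hmin]].
    exists (phi w ts x), ts.
    split; [apply phi_Omega1; auto; lra|].
    split; [|split; [exact Hts|split; [intros t Ht; apply enorm_vsub_le; auto|reflexivity]]].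
    intros z Hz. apply enorm_vsub_le.
    eapply Rle_trans; [apply Hmin|apply sqdist_phi_le; auto].
    unfold Rmax; destruct Rle_dec; destruct Hz as (? & ? & _); lra.
  - intros zs Hzs Hmin j Hj.
    rewrite (minimizer_coord n w x Hw (Hw 0%nat Hn) Hx zs Hzs Hmin j Hj).
    assert (0 < w 0%nat) by (apply Hw; lia). assert (0 < w j) by (apply Hw; lia).
    assert (Hc : w 0%nat * (w j / w 0%nat * zs 0%nat) = w j * zs 0%nat) by (field; lra).
    unfold Rmin; destruct Rle_dec; split; intros; nra.
Qed.
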